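(* Let $k\in\{0,1,\dots,n\}$ and $Z=\{\bm z\in\{0,1\}^n:\ \|\bm z\|_1=k\}$, and let $\mathbf 1\in\mathbb R^n$ be the all-ones vector. Then $$P(\mathbf 1)=\{(\bm x,\bm z)\in\mathbb R^n\times[0,1]^n:\ \|\bm x\|_1\le\sqrt k,\ \|\bm z\|_1=k\}.$$
   Context: For $\bm\alpha\in\mathbb R^n$, $P_0(\bm\alpha)=\{(\bm x,\bm z)\in\mathbb R^n\times Z:\ \sum_{i=1}^n|\alpha_ix_i|\le\sqrt{\sum_{i=1}^n\alpha_i^2z_i}\}$ and $P(\bm\alpha)=\operatorname{conv}(P_0(\bm\alpha))$, the convex hull. *)

From HB Require Import structures.
From mathcomp Require Import all_boot all_order all_algebra.
From mathcomp Require Import boolp classical_sets reals.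
Set Implicit Arguments. Unset Strict Implicit. Unset Printing Implicit Defensive.
Import Order.TTheory GRing.Theory Num.Theory.
Local Open Scope ring_scope.
Local Open Scope classical_set_scope.

Definition Zk (R : realType) (n k : nat) : set 'rV[R]_n :=
  [set z : 'rV[R]_n | (forall i, z 0 i = 0 \/ z 0 i = 1) /\ \sum_(i < n) `|z 0 i| = k%:R].

Definition P0 (R : realType) (n : nat) (Z : set 'rV[R]_n) (alpha : 'rV[R]_n)
  : set ('rV[R]_n * 'rV[R]_n) :=
  [set xz : 'rV[R]_n * 'rV[R]_n | Z xz.2 /\
     \sum_(i < n) `|alpha 0 i * xz.1 0 i|
       <= Num.sqrt (\sum_(i < n) alpha 0 i ^+ 2 * xz.2 0 i)].

Definition conv (R : realType) (n : nat) (S : set ('rV[R]_n * 'rV[R]_n))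
  : set ('rV[R]_n * 'rV[R]_n) :=
  [set y : 'rV[R]_n * 'rV[R]_n | exists (m : nat) (w : 'I_m -> R) (p : 'I_m -> 'rV[R]_n * 'rV[R]_n),
     [/\ (forall j, 0 <= w j), \sum_(j < m) w j = 1, (forall j, S (p j)),
         y.1 = \sum_(j < m) w j *: (p j).1 &
         y.2 = \sum_(j < m) w j *: (p j).2]].

Definition P (R : realType) (n : nat) (Z : set 'rV[R]_n) (alpha : 'rV[R]_n) :=
  conv (P0 Z alpha).

From HB Require Import structures.
From mathcomp Require Import all_boot all_order all_algebra.
From mathcomp Require Import boolp classical_sets reals.
From mathcomp Require Import ring lra.
Set Implicit Arguments. Unset Strict Implicit. Unset Printing Implicit Defensive.
Import Order.TTheory GRing.Theory Num.Theory.
Local Open Scope ring_scope.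
Local Open Scope classical_set_scope.

(* For [alpha = 1] the constraint defining [P_0] reads [||x||_1 <= sqrt k] and
   does not couple [x] with [z]; the hull is therefore the product of that
   l1-ball with the convex hull of [Z], which is the hypersimplex
   [{z in [0,1]^n : sum z = k}].  A point of the hypersimplex with a fractional
   coordinate has a second one, as the sum is an integer; moving mass between
   the two in either direction until one of them becomes integral exhibits the
   point as a convex combination of two points with fewer fractional
   coordinates. *)

Lemma sum_norm_ge0 (R : numDomainType) n (z : 'rV[R]_n) :
  (forall i, 0 <= z 0 i) -> \sum_(i < n) `|z 0 i| = \sum_(i < n) z 0 i.
Proof. by move=> z_ge0; apply: eq_bigr => i _; rewrite ger0_norm. Qed.

Section ConvexCombination.
Variables (R : numDomainType) (m : nat) (w : 'I_m -> R).
Hypotheses (w_ge0 : forall j, 0 <= w j) (w_sum1 : \sum_(j < m) w j = 1).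

Lemma convex_comb_le (a : 'I_m -> R) c :
  (forall j, a j <= c) -> \sum_(j < m) w j * a j <= c.
Proof.
move=> le_ac; rewrite -[leRHS]mul1r -w_sum1 mulr_suml.
by apply: ler_sum => j _; apply: ler_wpM2l.
Qed.

Lemma convex_comb_ge (a : 'I_m -> R) c :
  (forall j, c <= a j) -> c <= \sum_(j < m) w j * a j.
Proof.
move=> le_ca; rewrite -[leLHS]mul1r -w_sum1 mulr_suml.
by apply: ler_sum => j _; apply: ler_wpM2l.
Qed.

Lemma convex_comb_const (a : 'I_m -> R) c :
  (forall j, a j = c) -> \sum_(j < m) w j * a j = c.
Proof.
by move=> ac; apply/le_anti; rewrite convex_comb_le ?convex_comb_ge // => j; rewrite ac.
Qed.

Lemma row_sum_scaleE n (p : 'I_m -> 'rV[R]_n) i :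
  (\sum_(j < m) w j *: p j) 0 i = \sum_(j < m) w j * p j 0 i.
Proof. by rewrite summxE; apply: eq_bigr => j _; rewrite mxE. Qed.

Lemma convex_comb_l1_le n (p : 'I_m -> 'rV[R]_n) c :
  (forall j, \sum_(i < n) `|p j 0 i| <= c) ->
  \sum_(i < n) `|(\sum_(j < m) w j *: p j) 0 i| <= c.
Proof.
move=> le_pc; apply: le_trans (convex_comb_le le_pc).
under [leRHS]eq_bigr do rewrite mulr_sumr.
rewrite exchange_big /=; apply: ler_sum => i _; rewrite row_sum_scaleE.
apply: le_trans (ler_norm_sum _ _ _) _.
by apply: ler_sum => j _; rewrite normrM ger0_norm.
Qed.

End ConvexCombination.

Section Hull.
Variables (R : numDomainType) (V : lmodType R).

Definition hull (S : set V) : set V :=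
  [set v | exists m (w : 'I_m -> R) (p : 'I_m -> V),
    [/\ forall j, 0 <= w j, \sum_(j < m) w j = 1, forall j, S (p j) &
        v = \sum_(j < m) w j *: p j]].

Lemma sub_hull (S : set V) : S `<=` hull S.
Proof.
move=> v Sv; exists 1%N, (fun _ => 1), (fun _ => v).
by split; rewrite ?big_ord1 ?scale1r.
Qed.

Lemma hull_conv2 (S : set V) u v mu : hull S u -> hull S v -> 0 <= mu <= 1 ->
  hull S (mu *: u + (1 - mu) *: v).
Proof.
move=> [m1 [w1 [p1 [w1_ge0 w1_sum1 Sp1 ->]]]] [m2 [w2 [p2 [w2_ge0 w2_sum1 Sp2 ->]]]].
move=> /andP[mu_ge0 mu_le1]; have mu'_ge0 : 0 <= 1 - mu by rewrite subr_ge0.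
have splitl i : split (lshift m2 i) = inl i := unsplitK (inl i).
have splitr i : split (rshift m1 i) = inr i := unsplitK (inr i).
exists (m1 + m2)%N,
  (fun j => match split j with inl a => mu * w1 a | inr b => (1 - mu) * w2 b end),
  (fun j => match split j with inl a => p1 a | inr b => p2 b end).
split.
- by move=> j; case: (split j) => a; apply: mulr_ge0.
- rewrite big_split_ord /=; under eq_bigr do rewrite splitl.
  under [X in _ + X]eq_bigr do rewrite splitr.
  by rewrite -!mulr_sumr w1_sum1 w2_sum1 !mulr1 addrC subrK.
- by move=> j; case: (split j).
- rewrite big_split_ord /=; under [X in _ = X + _]eq_bigr do rewrite splitl.
  under [X in _ = _ + X]eq_bigr do rewrite splitr.
  by rewrite !scaler_sumr; congr (_ + _); apply: eq_bigr => i _; rewrite scalerA.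
Qed.

End Hull.

Section Transfer.
Variables (R : realFieldType) (n : nat).
Implicit Types (z : 'rV[R]_n) (i j : 'I_n).

Definition fractional (a : R) := (0 < a) && (a < 1).

Definition num_fractional z := #|[pred i | fractional (z 0 i)]|.

Definition hypersimplex (k : nat) : set 'rV[R]_n :=
  [set z | (forall i, 0 <= z 0 i <= 1) /\ \sum_(i < n) z 0 i = k%:R].

Definition transfer_amount z i j := Num.min (1 - z 0 i) (z 0 j).

Definition transfer z i j : 'rV[R]_n :=
  \row_l (z 0 l + transfer_amount z i j * ((l == i)%:R - (l == j)%:R)).

Lemma not_fractional a : 0 <= a <= 1 -> ~~ fractional a -> a = 0 \/ a = 1.
Proof.
move=> /andP[a_ge0 a_le1]; rewrite negb_and -!leNgt => /orP[a_le0|a_ge1].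
- by left; apply/le_anti; rewrite a_le0.
- by right; apply/le_anti; rewrite a_le1.
Qed.

Lemma sum_indicator i : \sum_(l < n) ((l == i)%:R : R) = 1.
Proof. by rewrite (bigD1 i) //= eqxx big1 ?addr0 // => l /negbTE ->. Qed.

Lemma transfer_amount_bounds z i j : fractional (z 0 i) -> fractional (z 0 j) ->
  [/\ 0 < transfer_amount z i j, transfer_amount z i j <= 1 - z 0 i
    & transfer_amount z i j <= z 0 j].
Proof.
rewrite /fractional /transfer_amount => /andP[? ?] /andP[? ?].
by rewrite lt_min !ge_min !lexx orbT subr_gt0; split=> //; apply/andP.
Qed.

Lemma transfer_hypersimplex k z i j : hypersimplex k z -> i != j ->
  fractional (z 0 i) -> fractional (z 0 j) -> hypersimplex k (transfer z i j).
Proof.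
move=> [z01 z_sum] neq_ij fi fj; have [e_gt0 e_le1 e_le] := transfer_amount_bounds fi fj.
split=> [l|].
- rewrite mxE; case: (eqVneq l i) => [->|neq_li].
    rewrite (negbTE neq_ij) subr0 mulr1.
    by have /andP[? ?] := z01 i; apply/andP; split; lra.
  case: (eqVneq l j) => [->|neq_lj]; last by rewrite subrr mulr0 addr0.
  rewrite sub0r mulrN1.
  by have /andP[? ?] := z01 j; apply/andP; split; lra.
- under eq_bigr do rewrite mxE.
  by rewrite big_split /= -mulr_sumr sumrB !sum_indicator subrr mulr0 addr0.
Qed.

Lemma transfer_num_fractional z i j : i != j ->
  fractional (z 0 i) -> fractional (z 0 j) ->
  (num_fractional (transfer z i j) < num_fractional z)%N.
Proof.
move=> neq_ij fi fj; rewrite /num_fractional; apply/proper_card/properP; split.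
  apply/fintype.subsetP => l; rewrite !inE mxE.
  case: (eqVneq l i) => [->|_] //; case: (eqVneq l j) => [->|_] //.
  by rewrite subrr mulr0 addr0.
have [le_ij|le_ji] := lerP (1 - z 0 i) (z 0 j).
- exists i; rewrite !inE // mxE eqxx (negbTE neq_ij) /transfer_amount min_l //.
  by rewrite subr0 mulr1 addrC subrK /fractional ltxx andbF.
- exists j; rewrite !inE // mxE eqxx eq_sym (negbTE neq_ij) /transfer_amount.
  by rewrite min_r ?ltW // sub0r mulrN1 subrr /fractional ltxx.
Qed.

Lemma transfer_conv2 z i j : i != j -> fractional (z 0 i) -> fractional (z 0 j) ->
  let e1 := transfer_amount z i j in let e2 := transfer_amount z j i in
  z = (e2 / (e1 + e2)) *: transfer z i j + (1 - e2 / (e1 + e2)) *: transfer z j i.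
Proof.
move=> neq_ij fi fj e1 e2.
have [e1_gt0 _ _] := transfer_amount_bounds fi fj.
have [e2_gt0 _ _] := transfer_amount_bounds fj fi.
have e12_neq0 : e1 + e2 != 0 by rewrite gt_eqF // addr_gt0.
apply/rowP => l; rewrite !mxE -/e1 -/e2.
case: (eqVneq l i) => [->|neq_li]; first by rewrite (negbTE neq_ij) /=; field.
case: (eqVneq l j) => [->|neq_lj] /=; first by field.
by rewrite !subrr !mulr0 !addr0; field.
Qed.

Lemma fractional_pair k z i : hypersimplex k z -> fractional (z 0 i) ->
  exists2 j, j != i & fractional (z 0 j).
Proof.
move=> [z01 z_sum] fi.
have [/existsP[j /andP[? ?]]|/existsPn others_integral] :=
  boolP [exists j, (j != i) && fractional (z 0 j)]; first by exists j.
have zE j : j != i -> z 0 j = (z 0 j == 1)%:R.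
  move=> neq_ji; have := others_integral j; rewrite neq_ji => /(not_fractional (z01 j)).
  by case=> ->; rewrite ?eqxx // eq_sym oner_eq0.
move: z_sum; rewrite (bigD1 i) //= (eq_bigr _ zE) -natr_sum.
set c := (\sum_(j | _) _)%N => z_sum; move: fi => /andP[? ?].
have [lt_ck|le_kc] := ltnP c k.
- have : (c.+1)%:R <= k%:R :> R by rewrite ler_nat.
  by rewrite -natr1; lra.
- have : k%:R <= c%:R :> R by rewrite ler_nat.
  lra.
Qed.

End Transfer.

Section Rounding.
Variables (R : realType) (n k : nat).

Lemma Zk_sum z : @Zk R n k z -> \sum_(i < n) z 0 i = k%:R.
Proof.
by move=> [z01 <-]; rewrite sum_norm_ge0 // => i; case: (z01 i) => ->.
Qed.

Lemma hypersimplex_integral z :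
  num_fractional z = 0%N -> hypersimplex k z -> @Zk R n k z.
Proof.
move=> /card0_eq nfrac0 [z01 z_sum]; split=> [i|].
- by apply: not_fractional => //; have := nfrac0 i; rewrite !inE => ->.
- by rewrite -z_sum sum_norm_ge0 // => i; case/andP: (z01 i).
Qed.

Lemma hypersimplex_sub_hull : hypersimplex k `<=` hull (@Zk R n k).
Proof.
move=> z; have [N] := ubnP (num_fractional z); elim: N z => // N IH z.
rewrite ltnS => le_zN hz.
have [nfrac0|] := posnP (num_fractional z).
  exact/sub_hull/hypersimplex_integral.
case/card_gt0P => i; rewrite inE => fi; have [j neq_ji fj] := fractional_pair hz fi.
have neq_ij : i != j by rewrite eq_sym.
have [e1_gt0 _ _] := transfer_amount_bounds fi fj.
have [e2_gt0 _ _] := transfer_amount_bounds fj fi.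
rewrite (transfer_conv2 neq_ij fi fj); apply: hull_conv2.
- apply: IH; last exact: transfer_hypersimplex.
  exact: leq_trans (transfer_num_fractional neq_ij fi fj) le_zN.
- apply: IH; last exact: transfer_hypersimplex.
  exact: leq_trans (transfer_num_fractional neq_ji fj fi) le_zN.
- have e12_gt0 := addr_gt0 e1_gt0 e2_gt0.
  by rewrite divr_ge0 ?(ltW e2_gt0) ?(ltW e12_gt0) //= ler_pdivrMr // mul1r lerDr ltW.
Qed.

Lemma P0_ones x z : P0 (@Zk R n k) (const_mx 1) (x, z) <->
  @Zk R n k z /\ \sum_(i < n) `|x 0 i| <= Num.sqrt (k%:R : R).
Proof.
rewrite /P0 /=.
under eq_bigr do rewrite mxE mul1r.
under [X in _ <= Num.sqrt X]eq_bigr do rewrite mxE expr1n mul1r.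
by split=> -[Zz le_x]; split; rewrite // ?(Zk_sum Zz) // -(Zk_sum Zz).
Qed.

Lemma mem_P_ones x z : P (@Zk R n k) (const_mx 1) (x, z) <->
  hypersimplex k z /\ \sum_(i < n) `|x 0 i| <= Num.sqrt (k%:R : R).
Proof.
split.
- move=> [m [w [p [w_ge0 w_sum1 P0p /= -> /= ->]]]].
  have {}P0p j := iffLR (P0_ones (p j).1 (p j).2) (P0p j).
  split; last by apply: convex_comb_l1_le => // j; case: (P0p j).
  split=> [i|].
  + rewrite row_sum_scaleE convex_comb_le ?convex_comb_ge // => j;
      by case: (P0p j) => -[/(_ i) [] -> _] _; rewrite ?lexx ?ler01.
  + rewrite (eq_bigr _ (fun i _ => row_sum_scaleE _ _ i)) exchange_big /=.
    under eq_bigr do rewrite -mulr_sumr.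
    by apply: convex_comb_const => // j; case: (P0p j) => /Zk_sum.
- move=> [/hypersimplex_sub_hull [m [w [p [w_ge0 w_sum1 Zp ->]]]] le_x].
  exists m, w, (fun j => (x, p j)); split=> //=.
  + by move=> j; apply/P0_ones.
  + by rewrite -scaler_suml w_sum1 scale1r.
Qed.

End Rounding.

Theorem mainTheorem7 (R : realType) (n k : nat) (hk : (k <= n)%N) :
  P (@Zk R n k) (const_mx 1) =
  [set xz : 'rV[R]_n * 'rV[R]_n | (forall i, 0 <= xz.2 0 i <= 1) /\
            \sum_(i < n) `|xz.1 0 i| <= Num.sqrt (k%:R : R) /\
            \sum_(i < n) `|xz.2 0 i| = k%:R].
Proof.
apply/seteqP; split=> -[x z] /=; rewrite mem_P_ones /hypersimplex /=.
- move=> [[z01 z_sum] le_x]; do 2!split=> //.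
  by rewrite -z_sum sum_norm_ge0 // => i; case/andP: (z01 i).
- move=> [z01 [le_x z_sum]]; do 2!split=> //.
  by rewrite -z_sum -sum_norm_ge0 // => i; case/andP: (z01 i).
Qed.
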